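(* Consider the Rasch model and the random pairing construction described in the context, and let $d_i=\sum_{j\ne i}L_{ij}$ for $i\in[m]$. Suppose that $mp\ge2$, that $m\le n^{\alpha}$ for some constant $\alpha>0$, and that $np\ge C\kappa_2^2\log(n)$ for some sufficiently large constant $C>0$. Then with probability at least $1-2n^{-10}$, for all $i\in[m]$, \[ \frac{1}{24\kappa_2}np\le d_i\le\frac32np. \]
   Context: Rasch model. Let $n$ (users) and $m$ (items) be positive integers, $\boldsymbol\zeta^\star\in\mathbb R^n$, $\boldsymbol\theta^\star\in\mathbb R^m$ unknown parameters, and $p\in(0,1]$. Each pair $(t,i)\in[n]\times[m]$ is observed independently with probability $p$; let $\mathcal E_X$ be the observed pairs and $n_t=|\{i:(t,i)\in\mathcal E_X\}|$. For $(t,i)\in\mathcal E_X$ one observes independent binary $X_{ti}$ with $\mathbb P[X_{ti}=1]=e^{\theta_i^\star}/(e^{\zeta_t^\star}+e^{\theta_i^\star})$. Define $\kappa_2\ge1$ by $\log\kappa_2=\max_{t,i}|\zeta_t^\star-\theta_i^\star|$. Random pairing: for each user $t$, randomly (uniformly, independently across users and of the responses) split the $n_t$ items user $t$ responded to into $\lfloor n_t/2\rfloor$ disjoint unordered pairs. If $\{i,j\}$ is a selected pair for user $t$, set $L^t_{ij}=L^t_{ji}=\mathbb 1\{X_{ti}\ne X_{tj}\}$; otherwise $L^t_{ij}=0$. Let $L_{ij}=\sum_{t=1}^nL^t_{ij}$. *)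

From HB Require Import structures.
From mathcomp Require Import all_boot all_order all_algebra.
From mathcomp Require Import reals sequences exp.
Set Implicit Arguments. Unset Strict Implicit. Unset Printing Implicit Defensive.
Import Order.TTheory GRing.Theory Num.Theory.
Local Open Scope ring_scope.

Section Rasch.
Variables (R : realType) (n m : nat).

(* An outcome of the whole experiment:
   - mask  (t,i) : whether pair (t,i) is observed (prob. p, independently);
   - resp  (t,i) : response X_ti (sampled for all pairs; only observed ones are used);
   - pairs t     : the random pairing of user t, a set of unordered pairs of items. *)
Definition outcome := ({ffun 'I_n * 'I_m -> bool} * {ffun 'I_n * 'I_m -> bool}
                       * {ffun 'I_n -> {set {set 'I_m}}})%type.

Definition observed (mask : {ffun 'I_n * 'I_m -> bool}) (t : 'I_n) : {set 'I_m} :=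
  [set i | mask (t, i)].

Definition is_pairing (S : {set 'I_m}) (P : {set {set 'I_m}}) : bool :=
  [&& [forall e in P, (#|e| == 2)%N && (e \subset S)],
      trivIset P & #|P| == (#|S| %/ 2)%N].

Definition num_pairings (S : {set 'I_m}) : nat :=
  #|[set P : {set {set 'I_m}} | is_pairing S P]|.

Definition prob1 (zeta : 'I_n -> R) (theta : 'I_m -> R) t i : R :=
  expR (theta i) / (expR (zeta t) + expR (theta i)).

Definition weight (p : R) (zeta : 'I_n -> R) (theta : 'I_m -> R) (w : outcome) : R :=
  let: (mask, X, pairs) := w in
  (\prod_(ti : 'I_n * 'I_m) (if mask ti then p else 1 - p))
  * (\prod_(ti : 'I_n * 'I_m)
       (if X ti then prob1 zeta theta ti.1 ti.2 else 1 - prob1 zeta theta ti.1 ti.2))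
  * (\prod_(t : 'I_n)
       (if is_pairing (observed mask t) (pairs t)
        then (num_pairings (observed mask t))%:R^-1 else 0)).

Definition Prob (p : R) zeta theta (E : pred outcome) : R :=
  \sum_(w : outcome | E w) weight p zeta theta w.

Definition Lt (w : outcome) (t : 'I_n) (i j : 'I_m) : nat :=
  let: (mask, X, pairs) := w in
  (([set i; j] \in pairs t) && (X (t, i) != X (t, j)) && (i != j))%N.

Definition Lij (w : outcome) (i j : 'I_m) : nat := (\sum_(t < n) Lt w t i j)%N.

Definition deg (w : outcome) (i : 'I_m) : nat := (\sum_(j < m | j != i) Lij w i j)%N.

Definition kappa2 (zeta : 'I_n -> R) (theta : 'I_m -> R) : R :=
  expR (\big[Num.max/0]_(ti : 'I_n * 'I_m) `|zeta ti.1 - theta ti.2|).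

End Rasch.

From HB Require Import structures.
From mathcomp Require Import all_boot all_order all_algebra fingroup perm.
From mathcomp Require Import reals sequences exp.
From mathcomp Require Import zify ring lra.
Set Implicit Arguments. Unset Strict Implicit. Unset Printing Implicit Defensive.
Import Order.TTheory GRing.Theory Num.Theory.

(* Each user t contributes at most one unit to d_i, exactly when i is paired in
   t's random pairing with an item j whose response differs.  The outcome
   distribution is a product over users, so the moment generating function of
   d_i factorizes and Chernoff bounds reduce everything to the probability q_t
   of such a contribution.  On the one hand q_t <= p, since i must be observed.
   On the other hand q_t >= p / (8 kappa_2): i is observed together with some
   other item with probability p (1 - (1 - p)^(m-1)) >= p / 2; a uniform pairing
   then covers i with probability >= 1/2, because a transposition maps the
   pairings missing i injectively to pairings covering i; and two paired
   responses differ with probability >= 1 / (2 kappa_2).  Both tails of d_i are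
   then at most exp (- n p / (48 kappa_2)), which a union bound over the
   m <= n^alpha items turns into 2 n^-10 once n p >= 48 (alpha + 10) kappa_2^2 log n. *)

Section Pairings.
Variable m : nat.
Implicit Types (S e : {set 'I_m}) (P : {set {set 'I_m}}).

Lemma pairing_block S P e : is_pairing S P -> e \in P -> #|e| = 2 /\ e \subset S.
Proof. by case/and3P=> /forall_inP blocks _ _ /blocks /andP[/eqP]. Qed.

Lemma cover_pairing_sub S P : is_pairing S P -> cover P \subset S.
Proof. by move=> hP; apply/bigcupsP=> e /(pairing_block hP) []. Qed.

Lemma card_uncovered_le1 S P : is_pairing S P -> #|S :\: cover P| <= 1.
Proof.
move=> hP; have /and3P[_ /eqP trivP /eqP cardP] := hP.
rewrite cardsDS ?cover_pairing_sub // -trivP (eq_bigr (fun=> 2)); last first.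
  by move=> e /(pairing_block hP) [].
by rewrite sum_nat_const cardP; lia.
Qed.

Lemma pairing_setU1 S P e : e \subset S -> #|e| = 2 ->
  is_pairing (S :\: e) P -> is_pairing S (e |: P).
Proof.
move=> eS e2 hP; have /and3P[_ trivP /eqP cardP] := hP.
have P0 : set0 \notin P by apply/negP=> /(pairing_block hP) []; rewrite cards0.
have disj_eP : {in P, forall B : {set 'I_m}, [disjoint e & B]}.
  by move=> B /(pairing_block hP) [_]; rewrite subsetD disjoint_sym => /andP[].
have [trivP' eP] := trivIsetU1 disj_eP trivP P0.
apply/and3P; split=> //.
- apply/forall_inP=> B; case/setU1P => [->|/(pairing_block hP) [-> BS]].
    by rewrite e2 eqxx.
  by rewrite eqxx (subset_trans BS) ?subsetDl.
- have S_ge2 : 2 <= #|S| by rewrite -e2 subset_leq_card.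
  by rewrite cardsU1 eP cardP cardsDS // e2; apply/eqP; lia.
Qed.

Lemma exists_pairing S : exists P, is_pairing S P.
Proof.
have [k] := ubnP #|S|; elim: k S => // k IH S ltSk.
have [S_le1|S_gt1] := leqP #|S| 1.
  exists set0; apply/and3P; split.
  - by apply/forall_inP=> e; rewrite inE.
  - by rewrite /trivIset /cover !big_set0 cards0.
  - by rewrite cards0; apply/eqP; lia.
have [a aS] : exists a, a \in S by apply/set0Pn; rewrite -card_gt0; lia.
have [b] : exists b, b \in S :\ a.
  by apply/set0Pn; rewrite -card_gt0; move: (cardsD1 a S); rewrite aS; lia.
rewrite !inE => /andP[ba bS].
have abS : [set a; b] \subset S by apply/subsetP=> x; rewrite !inE => /orP[] /eqP->.
have ab2 : #|[set a; b]| = 2 by rewrite cards2 eq_sym ba.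
have [|P hP] := IH (S :\: [set a; b]); last by exists ([set a; b] |: P); apply: pairing_setU1.
by rewrite cardsDS // ab2; lia.
Qed.

Lemma num_pairings_gt0 S : 0 < num_pairings S.
Proof.
by have [P hP] := exists_pairing S; rewrite card_gt0; apply/set0Pn; exists P; rewrite inE.
Qed.

Lemma pairing_imset (f : 'I_m -> 'I_m) S P : injective f -> f @: S \subset S ->
  is_pairing S P -> is_pairing S [set f @: (B : {set 'I_m}) | B in P].
Proof.
move=> f_inj fS hP; have /and3P[_ trivP cardP] := hP.
apply/and3P; split.
- apply/forall_inP=> _ /imsetP[B /(pairing_block hP) [B2 BS] ->].
  by rewrite card_imset // B2 eqxx (subset_trans (imsetS f BS)).
- by rewrite imset_trivIset.
- by rewrite card_imset //; apply: imset_inj.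
Qed.

Lemma partner_of_cover S P i : is_pairing S P -> i \in cover P ->
  exists2 j, j != i & [set i; j] \in P.
Proof.
move=> hP /bigcupP[e eP ie]; have [/eqP/cards2P[x [y [xy exy]]] _] := pairing_block hP eP.
move: ie; rewrite exy !inE => /orP[] /eqP ->; first by exists y; rewrite 1?eq_sym -?exy.
by exists x; rewrite // setUC -exy.
Qed.

Lemma trivIset_set2_uniq P i j k : trivIset P ->
  [set i; j] \in P -> [set i; k] \in P -> k != i -> j = k.
Proof.
move=> trivP ijP ikP ki; have [eq_ijk|neq_ijk] := eqVneq [set i; j] [set i; k].
  by have := set22 i k; rewrite -eq_ijk !inE (negbTE ki) => /eqP->.
have := trivIsetP trivP _ _ ijP ikP neq_ijk.
by rewrite -setI_eq0 => /eqP/setP/(_ i); rewrite !inE eqxx.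
Qed.

Lemma card_uncovered_le_covered S i : i \in S -> 1 < #|S| ->
  #|[set P | is_pairing S P & i \notin cover P]|
    <= #|[set P | is_pairing S P & i \in cover P]|.
Proof.
move=> iS S_gt1; have [b] : exists b, b \in S :\ i.
  by apply/set0Pn; rewrite -card_gt0; move: (cardsD1 i S); rewrite iS; lia.
rewrite !inE => /andP[bi bS]; set f := tperm i b.
have f_inj : injective f := @perm_inj _ f.
rewrite -(card_imset _ (imset_inj (imset_inj f_inj))).
apply/subset_leq_card/subsetP=> _ /imsetP[P + ->]; rewrite inE => /andP[hP iP].
have fS : f @: S \subset S.
  by apply/subsetP=> _ /imsetP[x xS ->]; rewrite /f; case: tpermP.
rewrite inE pairing_imset // cover_imset -imset_cover -{1}(tpermR i b) mem_imset //.
apply/negPn/negP=> bP; have := card_uncovered_le1 hP.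
by rewrite (cardsD1 i) (cardsD1 b) !inE iS iP bS bP bi.
Qed.

End Pairings.

Local Open Scope ring_scope.

Section BernoulliProduct.
Variables (R : comRingType) (I : finType) (a : I -> R).

Definition bern_prod (f : {ffun I -> bool}) : R :=
  \prod_i (if f i then a i else 1 - a i).

Lemma sum_bern_prodM (g : I -> bool -> R) :
  \sum_f bern_prod f * \prod_i g i (f i)
    = \prod_i (a i * g i true + (1 - a i) * g i false).
Proof.
transitivity (\prod_i \sum_(b : bool) (if b then a i else 1 - a i) * g i b).
  by rewrite bigA_distr_bigA; apply: eq_bigr => f _; rewrite big_split.
by apply: eq_bigr => i _; rewrite big_bool.
Qed.

Lemma sum_bern_prod : \sum_f bern_prod f = 1.
Proof.
transitivity (\sum_f bern_prod f * \prod_(i : I) (1 : R)).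
  by under [RHS]eq_bigr do rewrite big1_eq mulr1.
by rewrite (sum_bern_prodM (fun _ _ => 1)) big1 // => i _; rewrite !mulr1 subrKC.
Qed.

Lemma sum_bern_prod_set (A : {set I}) :
  \sum_f bern_prod f * \prod_(i in A) (f i)%:R = \prod_(i in A) a i.
Proof.
under [LHS]eq_bigr do rewrite big_mkcond /=.
rewrite (sum_bern_prodM (fun i b => if i \in A then b%:R else 1)) [RHS]big_mkcond.
apply: eq_bigr => i _.
by case: (i \in A); rewrite /= ?mulr1 ?mulr0 ?addr0 ?subrKC.
Qed.

Lemma sum_bern_prod_coord i : \sum_f bern_prod f * (f i)%:R = a i.
Proof.
have := sum_bern_prod_set [set i]; rewrite big_set1 => <-.
by apply: eq_bigr => f _; rewrite big_set1.
Qed.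

Lemma sum_bern_prod_neq i j : i != j ->
  \sum_f bern_prod f * (f i != f j)%:R = a i * (1 - a j) + (1 - a i) * a j.
Proof.
move=> ij; have prod_ij (F : I -> R) : \prod_(k in [set i; j]) F k = F i * F j.
  by rewrite big_setU1 ?big_set1 // inE.
have neqE (f : {ffun I -> bool}) :
    (f i != f j)%:R = (f i)%:R + (f j)%:R - 2 * ((f i)%:R * (f j)%:R) :> R.
  by case: (f i); case: (f j) => /=; ring.
have sum_ij : \sum_f bern_prod f * ((f i)%:R * (f j)%:R) = a i * a j.
  rewrite -(prod_ij a) -sum_bern_prod_set.
  by apply: eq_bigr => f _; rewrite (prod_ij (fun k => (f k)%:R)).
under eq_bigr do rewrite neqE mulrBr mulrDr mulrCA.
rewrite sumrB big_split /= !sum_bern_prod_coord -mulr_sumr sum_ij; ring.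
Qed.

End BernoulliProduct.

Lemma bern_prod_ge0 (R : numDomainType) (I : finType) (a : I -> R) f :
  (forall i, 0 <= a i <= 1) -> 0 <= bern_prod a f.
Proof.
by move=> a01; apply: prodr_ge0 => i _; case: (f i); have /andP[] := a01 i; rewrite ?subr_ge0.
Qed.

Section UniformPairing.
Variables (R : realFieldType) (m : nat).
Implicit Types (S : {set 'I_m}) (P : {set {set 'I_m}}).

Definition unif_pairing S P : R :=
  if is_pairing S P then (num_pairings S)%:R^-1 else 0.

Lemma unif_pairing_ge0 S P : 0 <= unif_pairing S P.
Proof. by rewrite /unif_pairing; case: ifP; rewrite // invr_ge0 ler0n. Qed.

Lemma sum_unif_pairing_pred S (Q : pred {set {set 'I_m}}) :
  \sum_P unif_pairing S P * (Q P)%:R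
    = #|[set P | is_pairing S P & Q P]|%:R / (num_pairings S)%:R.
Proof.
rewrite (eq_bigr (fun P => if is_pairing S P && Q P then (num_pairings S)%:R^-1 else 0)).
  by rewrite -big_mkcond sumr_const cardsE -[_ *+ _]mulr_natl.
by move=> P _; rewrite /unif_pairing; case: is_pairing; case: (Q P); rewrite ?mulr1 ?mulr0.
Qed.

Lemma sum_unif_pairing S : \sum_P unif_pairing S P = 1.
Proof.
transitivity (\sum_P unif_pairing S P * (xpredT P)%:R).
  by under [RHS]eq_bigr do rewrite mulr1.
rewrite sum_unif_pairing_pred (eq_card (B := [set P | is_pairing S P])) => [|P].
  by rewrite divff // pnatr_eq0 -lt0n num_pairings_gt0.
by rewrite !inE andbT.
Qed.

Lemma sum_unif_pairing_cover S i : i \in S -> (1 < #|S|)%N ->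
  2^-1 <= \sum_P unif_pairing S P * (i \in cover P)%:R.
Proof.
move=> iS S_gt1; rewrite sum_unif_pairing_pred.
have N_gt0 := num_pairings_gt0 S.
have := card_uncovered_le_covered iS S_gt1.
have NE : num_pairings S = (#|[set P | is_pairing S P & i \in cover P]|
                          + #|[set P | is_pairing S P & i \notin cover P]|)%N.
  rewrite /num_pairings -(cardsID [set P | i \in cover P]).
  by congr (_ + _)%N; apply: eq_card => P; rewrite !inE // andbC.
rewrite NE in N_gt0 *; set u := #|_|; set c := #|_| => uc.
rewrite ler_pdivlMr ?ltr0n // natrD.
rewrite -(ler_nat R) in uc; lra.
Qed.

End UniformPairing.

Definition user_sample (m : nat) :=
  ({ffun 'I_m -> bool} * {ffun 'I_m -> bool} * {set {set 'I_m}})%type.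

(* [discordant i (user_proj w t)] is the paper's sum_j L^t_ij, the contribution
   of user t to d_i (see deg_user_proj). *)
Definition discordant (m : nat) (i : 'I_m) (u : user_sample m) : bool :=
  let: (_, X, P) := u in [exists j, [&& j != i, [set i; j] \in P & X i != X j]].

Lemma sum_user_sample (R : nmodType) (m : nat) (F : user_sample m -> R) :
  \sum_u F u = \sum_mk \sum_X \sum_P F (mk, X, P).
Proof. by rewrite !pair_bigA; apply: eq_bigr => -[[]]. Qed.

Section UserModel.
Variables (R : realFieldType) (m : nat) (p : R) (a : 'I_m -> R).
Hypotheses (p01 : 0 <= p <= 1) (a01 : forall i, 0 <= a i <= 1).

Definition user_weight (u : user_sample m) : R :=
  let: (mk, X, P) := u in
  bern_prod (fun=> p) mk * bern_prod a X * unif_pairing R [set k | mk k] P.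

Lemma user_weight_ge0 u : 0 <= user_weight u.
Proof. by case: u => [[mk X] P]; rewrite !mulr_ge0 ?bern_prod_ge0 ?unif_pairing_ge0. Qed.

Lemma sum_user_weight_mask (h : {ffun 'I_m -> bool} -> R) :
  \sum_u user_weight u * h u.1.1 = \sum_mk bern_prod (fun=> p) mk * h mk.
Proof.
rewrite sum_user_sample; apply: eq_bigr => mk _.
rewrite -[RHS]mulr1 -(sum_bern_prod a) mulr_sumr; apply: eq_bigr => X _.
rewrite -[RHS]mulr1 -(sum_unif_pairing R [set k | mk k]) mulr_sumr.
by apply: eq_bigr => P _ /=; ring.
Qed.

Lemma sum_user_weight : \sum_u user_weight u = 1.
Proof.
transitivity (\sum_u user_weight u * 1); first by under [RHS]eq_bigr do rewrite mulr1.
rewrite (sum_user_weight_mask (fun=> 1)).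
by under eq_bigr do rewrite mulr1; rewrite sum_bern_prod.
Qed.

Lemma discordant_observed i u : user_weight u != 0 -> discordant i u -> u.1.1 i.
Proof.
case: u => [[mk X] P] /=; rewrite /unif_pairing.
case: ifP => [hP _|]; last by rewrite mulr0 eqxx.
case/existsP=> j /and3P[_ ijP _]; have [_ /subsetP] := pairing_block hP ijP.
by move/(_ i); rewrite !inE eqxx; apply.
Qed.

Lemma user_discordant_le i : \sum_u user_weight u * (discordant i u)%:R <= p.
Proof.
rewrite -[p in _ <= p](sum_bern_prod_coord (fun=> p) i) -sum_user_weight_mask.
apply: ler_sum => u _; have [->|w_neq0] := eqVneq (user_weight u) 0; first by rewrite !mul0r.
apply: ler_wpM2l; first exact: user_weight_ge0.
by case: (boolP (discordant i u)) => [/(discordant_observed w_neq0)->|].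
Qed.

Section LowerBound.
Variables (i : 'I_m) (delta : R).
Hypotheses (delta_ge0 : 0 <= delta)
  (delta_le : forall j, j != i -> delta <= a i * (1 - a j) + (1 - a i) * a j).

Lemma sum_bern_discordant_ge (mk : {ffun 'I_m -> bool}) P :
  is_pairing [set k | mk k] P -> i \in cover P ->
  delta <= \sum_X bern_prod a X * (discordant i (mk, X, P))%:R.
Proof.
move=> hP /(partner_of_cover hP) [j ji ijP].
apply: le_trans (delta_le ji) _; rewrite -sum_bern_prod_neq 1?eq_sym //.
apply: ler_sum => X _; apply: ler_wpM2l; first exact: bern_prod_ge0.
case: (boolP (X i != X j)) => //= Xij; rewrite ler1n lt0b.
by apply/existsP; exists j; rewrite ji ijP.
Qed.

Lemma sum_pairing_discordant_ge (mk : {ffun 'I_m -> bool}) :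
  delta / 2 * (mk i && (1 < #|[set k | mk k]|)%N)%:R
    <= \sum_P unif_pairing R [set k | mk k] P
         * \sum_X bern_prod a X * (discordant i (mk, X, P))%:R.
Proof.
set S := [set k | mk k].
apply: (@le_trans _ _ (\sum_P unif_pairing R S P * (delta * (i \in cover P)%:R))).
  case: andP => [[mki S_gt1]|_]; last first.
    by rewrite mulr0 sumr_ge0 // => P _; rewrite !mulr_ge0 ?unif_pairing_ge0.
  under eq_bigr do rewrite mulrCA.
  by rewrite -mulr_sumr mulr1 ler_wpM2l // sum_unif_pairing_cover // inE.
apply: ler_sum => P _; rewrite /unif_pairing; case: ifP => hP; last by rewrite !mul0r.
apply: ler_wpM2l; first by rewrite invr_ge0 ler0n.
case: (boolP (i \in cover P)) => iP; first by rewrite mulr1 sum_bern_discordant_ge.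
by rewrite mulr0 sumr_ge0 // => X _; rewrite mulr_ge0 ?bern_prod_ge0.
Qed.

Lemma observed_not_alone_ge (mk : {ffun 'I_m -> bool}) :
  (mk i)%:R - (mk == [ffun k => k == i])%:R
    <= (mk i && (1 < #|[set k | mk k]|)%N)%:R :> R.
Proof.
case mki: (mk i) => /=; last by rewrite sub0r oppr_le0 ler0n.
case: ltnP => [_|S_le1]; first by rewrite lerBlDr lerDl ler0n.
suff -> : mk = [ffun k => k == i] by rewrite eqxx subrr.
apply/ffunP => k; rewrite ffunE; case: eqP => [->//|/eqP ki].
apply/negbTE/negP => mkk; move: S_le1.
by rewrite (cardsD1 i) (cardsD1 k) !inE mki mkk ki.
Qed.

Lemma bern_prod_single : bern_prod (fun=> p) [ffun k => k == i] = p * (1 - p) ^+ m.-1.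
Proof.
rewrite /bern_prod (bigD1 i) //= ffunE eqxx; congr (_ * _).
rewrite (eq_bigr (fun=> 1 - p)) => [|k /negbTE ki]; last by rewrite ffunE ki.
by rewrite prodr_const cardC1 card_ord.
Qed.

Lemma user_discordant_ge :
  delta / 2 * (p * (1 - (1 - p) ^+ m.-1))
    <= \sum_u user_weight u * (discordant i u)%:R.
Proof.
have -> : \sum_u user_weight u * (discordant i u)%:R = \sum_mk bern_prod (fun=> p) mk *
    \sum_P unif_pairing R [set k | mk k] P * \sum_X bern_prod a X * (discordant i (mk, X, P))%:R.
  rewrite sum_user_sample; apply: eq_bigr => mk _; rewrite exchange_big mulr_sumr.
  apply: eq_bigr => P _; rewrite !mulr_sumr; apply: eq_bigr => X _ /=; ring.
apply: (@le_trans _ _ (\sum_mk bern_prod (fun=> p) mk *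
    (delta / 2 * ((mk i)%:R - (mk == [ffun k => k == i])%:R)))).
  under eq_bigr do rewrite mulrCA mulrBr.
  rewrite -mulr_sumr sumrB sum_bern_prod_coord.
  rewrite (bigD1 [ffun k => k == i]) //= eqxx mulr1 big1 ?addr0 => [|mk /negbTE->].
    by rewrite bern_prod_single mulrBr mulr1.
  by rewrite mulr0.
apply: ler_sum => mk _; apply: ler_wpM2l; first exact: bern_prod_ge0.
apply: le_trans (sum_pairing_discordant_ge mk); apply: ler_wpM2l; last exact: observed_not_alone_ge.
by rewrite divr_ge0.
Qed.

End LowerBound.

End UserModel.

Section OutcomeProduct.
Variables (n m : nat).

Definition user_proj (w : outcome n m) (t : 'I_n) : user_sample m :=
  let: (mask, X, pairs) := w in ([ffun i => mask (t, i)], [ffun i => X (t, i)], pairs t).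

Definition outcome_of_users (g : {ffun 'I_n -> user_sample m}) : outcome n m :=
  ([ffun ti => (g ti.1).1.1 ti.2], [ffun ti => (g ti.1).1.2 ti.2], [ffun t => (g t).2]).

Lemma user_proj_bij : bijective (fun w => [ffun t => user_proj w t]).
Proof.
exists outcome_of_users.
  by case=> [[mask X] pairs]; congr (_, _, _); apply/ffunP=> -[t i]; rewrite !ffunE.
move=> g; apply/ffunP=> t; rewrite !ffunE /=; case Egt: (g t) => [[mk X] P].
by congr (_, _, _); try apply/ffunP=> i; rewrite !ffunE /= Egt.
Qed.

Lemma sum_outcome_prod (R : comPzSemiRingType) (F : 'I_n -> user_sample m -> R) :
  \sum_w \prod_t F t (user_proj w t) = \prod_t \sum_u F t u.
Proof.
rewrite bigA_distr_bigA (reindex _ (onW_bij _ user_proj_bij)) /=.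
by apply: eq_bigr => w _; apply: eq_bigr => t _; rewrite ffunE.
Qed.

End OutcomeProduct.

Section Model.
Variables (R : realType) (n m : nat) (p : R) (zeta : 'I_n -> R) (theta : 'I_m -> R).
Hypothesis p01 : 0 <= p <= 1.

Lemma prob1_01 t i : 0 <= prob1 zeta theta t i <= 1.
Proof.
have ez := expR_gt0 (zeta t); have et := expR_gt0 (theta i).
rewrite /prob1; apply/andP; split; first by rewrite divr_ge0 // ltW // addr_gt0.
by rewrite ler_pdivrMr ?addr_gt0 // mul1r lerDr ltW.
Qed.

Lemma weightE w :
  weight p zeta theta w = \prod_t user_weight p (prob1 zeta theta t) (user_proj w t).
Proof.
have prod_pair (F : 'I_n * 'I_m -> R) : \prod_ti F ti = \prod_t \prod_i F (t, i).
  by rewrite pair_bigA; apply: eq_bigr => -[].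
case: w => [[mask X] pairs]; rewrite /weight !prod_pair -!big_split /=.
apply: eq_bigr => t _; rewrite /bern_prod /unif_pairing /observed.
have -> : [set k | [ffun i => mask (t, i)] k] = [set i | mask (t, i)].
  by apply/setP=> i; rewrite !inE ffunE.
by congr (_ * _ * _); apply: eq_bigr => i _; rewrite ffunE.
Qed.

Lemma weight_ge0 w : 0 <= weight p zeta theta w.
Proof.
by rewrite weightE prodr_ge0 // => t _; rewrite user_weight_ge0 // => i; apply: prob1_01.
Qed.

Lemma sum_weight : \sum_w weight p zeta theta w = 1.
Proof.
under eq_bigr do rewrite weightE.
rewrite (sum_outcome_prod (fun t => user_weight p (prob1 zeta theta t))).
by rewrite big1 // => t _; rewrite sum_user_weight.
Qed.

Lemma Prob_compl (E : pred (outcome n m)) :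
  Prob p zeta theta E = 1 - \sum_(w | ~~ E w) weight p zeta theta w.
Proof. by rewrite /Prob -sum_weight [X in X - _](bigID E) /= addrK. Qed.

Lemma deg_user_proj w i : weight p zeta theta w != 0 ->
  deg w i = (\sum_t discordant i (user_proj w t))%N.
Proof.
rewrite weightE => /prodf_neq0 w_neq0; rewrite /deg /Lij exchange_big /=.
apply: eq_bigr => t _; move/(_ t isT): w_neq0.
case: w => [[mask X] pairs] /=; rewrite /unif_pairing mulf_eq0 negb_or => /andP[_].
case: ifP => [/and3P[_ trivP _] _|]; last by rewrite eqxx.
case: (boolP [exists j, _]) => [/existsP[j /and3P[ji ijP]]|no_disc].
  rewrite !ffunE => Xij; rewrite (bigD1 j) //= ijP Xij eq_sym ji big1 // => k /andP[ki kj].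
  case: (boolP ([set i; k] \in _)) => // ikP.
  by rewrite (trivIset_set2_uniq trivP ikP ijP ji) eqxx in kj.
rewrite big1 // => j ji; apply/eqP; rewrite eqb0; apply: contra no_disc.
by case/andP=> /andP[ijP Xij] _; apply/existsP; exists j; rewrite ji ijP !ffunE.
Qed.

Definition discord_prob t i :=
  \sum_u user_weight p (prob1 zeta theta t) u * (discordant i u)%:R.

Lemma mgf_deg i lam :
  \sum_w weight p zeta theta w * expR (lam * (deg w i)%:R)
    = \prod_t (1 + (expR lam - 1) * discord_prob t i).
Proof.
transitivity (\sum_w \prod_t (user_weight p (prob1 zeta theta t) (user_proj w t)
                              * expR (lam * (discordant i (user_proj w t))%:R))).
  apply: eq_bigr => w _; rewrite big_split /= -weightE -expR_sum -mulr_sumr -natr_sum.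
  by have [->|/deg_user_proj->] := eqVneq (weight p zeta theta w) 0; rewrite ?mul0r.
rewrite (sum_outcome_prod (fun t u => user_weight p (prob1 zeta theta t) u
                                     * expR (lam * (discordant i u)%:R))).
apply: eq_bigr => t _; set uw := user_weight p (prob1 zeta theta t).
rewrite (eq_bigr (fun u => uw u + (expR lam - 1) * (uw u * (discordant i u)%:R))).
  by rewrite big_split /= sum_user_weight -mulr_sumr.
by move=> u _; case: discordant; rewrite /= ?mulr1 ?mulr0 ?expR0; ring.
Qed.

End Model.

Lemma discordance_ge (R : realFieldType) (x y z k : R) : 0 < x -> 0 < y -> 0 < z ->
  1 <= k -> z <= k * x -> x <= k * z ->
  (2 * k)^-1 <= x / (z + x) * (1 - y / (z + y)) + (1 - x / (z + x)) * (y / (z + y)).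
Proof.
move=> x0 y0 z0 k1 zx xz; have k0 : 0 < k by apply: lt_le_trans k1.
have -> : x / (z + x) * (1 - y / (z + y)) + (1 - x / (z + x)) * (y / (z + y))
          = z * (x + y) / ((z + x) * (z + y)).
  by field; rewrite !gt_eqF ?addr_gt0.
rewrite ler_pdivlMr ?mulr_gt0 ?addr_gt0 // ler_pdivrMl ?mulr_gt0 //.
have := ler_wpM2l (ltW z0) zx; have := ler_wpM2r (ltW y0) xz.
have := ler_wpM2r (mulr_ge0 (ltW z0) (ltW x0)) k1.
have := ler_wpM2r (mulr_ge0 (ltW z0) (ltW y0)) k1.
nra.
Qed.

Section Kappa.
Variables (R : realType) (n m : nat) (zeta : 'I_n -> R) (theta : 'I_m -> R).

Lemma kappa2_ge1 : 1 <= kappa2 zeta theta.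
Proof.
rewrite -expR0 ler_expR; apply: (big_ind (fun x : R => 0 <= x)) => // x y x0 y0.
by rewrite le_max x0.
Qed.

Lemma expR_kappa2_bounds t i :
  expR (zeta t) <= kappa2 zeta theta * expR (theta i)
  /\ expR (theta i) <= kappa2 zeta theta * expR (zeta t).
Proof.
have le_max := le_bigmax 0 (fun ti : 'I_n * 'I_m => `|zeta ti.1 - theta ti.2|) (t, i).
rewrite -!expRD !ler_expR -!lerBlDr; split; apply: le_trans le_max.
  exact: ler_norm.
by rewrite distrC ler_norm.
Qed.

Lemma prob1_discordance_ge t i j :
  (2 * kappa2 zeta theta)^-1 <= prob1 zeta theta t i * (1 - prob1 zeta theta t j)
                                + (1 - prob1 zeta theta t i) * prob1 zeta theta t j.
Proof.
have [zt_le ti_le] := expR_kappa2_bounds t i.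
by apply: discordance_ge; rewrite ?expR_gt0 ?kappa2_ge1.
Qed.

End Kappa.

Section ExpBounds.
Variable R : realType.

Lemma expRN1_le_half : expR (-1) <= 2^-1 :> R.
Proof.
rewrite expRN lef_pV2 ?posrE ?expR_gt0 //.
by have := expR_ge1Dx (1 : R); rewrite (_ : 1 + 1 = 2).
Qed.

Lemma expR_quarter_le : expR 4^-1 - 1 <= 3^-1 :> R.
Proof.
have := expR_ge1Dx (- 4^-1 : R); have := expRxMexpNx_1 (4^-1 : R).
have := expR_gt0 (4^-1 : R); nra.
Qed.

Lemma one_sub_pow_le_expR (p : R) k : 0 <= p <= 1 -> (1 - p) ^+ k <= expR (- (k%:R * p)).
Proof.
case/andP=> p0 p1; rewrite -mulrN expRM_natl lerXn2r ?nnegrE ?subr_ge0 ?expR_ge0 //.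
exact: expR_ge1Dx.
Qed.

End ExpBounds.

Section Chernoff.
Variables (R : realType) (T : finType) (w : T -> R).
Hypothesis w_ge0 : forall x, 0 <= w x.

Lemma exp_markov (f : T -> R) (b lam : R) : 0 <= lam ->
  \sum_(x | b < f x) w x <= expR (- (lam * b)) * \sum_x w x * expR (lam * f x).
Proof.
move=> lam0; rewrite mulr_sumr [X in _ <= X](bigID (fun x => b < f x)) /=.
rewrite -[X in X <= _]addr0 lerD ?sumr_ge0 // => [|x _]; last first.
  by rewrite mulr_ge0 ?mulr_ge0 ?expR_ge0.
apply: ler_sum => x /ltW bf; rewrite mulrCA -expRD -[w x in X in X <= _]mulr1.
by rewrite ler_wpM2l // -expR0 ler_expR addrC -mulrBr mulr_ge0 // subr_ge0.
Qed.

End Chernoff.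

Lemma prod_mgf_le (R : realType) (I : finType) (q : I -> R) lam :
  (forall t, 0 <= q t <= 1) ->
  \prod_t (1 + (expR lam - 1) * q t) <= expR ((expR lam - 1) * \sum_t q t).
Proof.
move=> q01; rewrite mulr_sumr expR_sum; apply: ler_prod => t _.
rewrite expR_ge1Dx andbT; have /andP[q0 q1] := q01 t; have := expR_gt0 lam; nra.
Qed.

Section UnionBound.
Variables (R : numDomainType) (T : finType) (w : T -> R).
Hypothesis w_ge0 : forall x, 0 <= w x.

Lemma union_bound (I : finType) (E : I -> pred T) :
  \sum_(x | ~~ [forall i, E i x]) w x <= \sum_i \sum_(x | ~~ E i x) w x.
Proof.
under [X in _ <= X]eq_bigr do rewrite big_mkcond /=.
rewrite exchange_big /= big_mkcond /=; apply: ler_sum => x _.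
case: (boolP [forall i, E i x]) => /= [_|]; first by rewrite sumr_ge0 // => i _; case: ifP.
rewrite negb_forall => /existsP[i0 Ei0]; rewrite (bigD1 i0) //= Ei0 lerDl.
by rewrite sumr_ge0 // => i _; case: ifP.
Qed.

Lemma sum_negb_and_le (E F : pred T) :
  \sum_(x | ~~ (E x && F x)) w x <= \sum_(x | ~~ E x) w x + \sum_(x | ~~ F x) w x.
Proof.
rewrite !(big_mkcond (fun x => ~~ _)) -big_split /=; apply: ler_sum => x _.
by case: (E x); case: (F x); rewrite /= ?addr0 ?add0r ?lerDl.
Qed.

End UnionBound.

Lemma mul_expRN_le_powN (R : realType) (x y M alpha : R) : 0 < x ->
  M <= x `^ alpha -> (alpha + 10) * ln x <= y -> M * expR (- y) <= x ^- 10.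
Proof.
move=> x0 M_le y_ge; apply: le_trans (ler_wpM2r (expR_ge0 _) M_le) _.
apply: le_trans (ler_wpM2l (powR_ge0 _ _) (_ : _ <= expR (- ((alpha + 10) * ln x)))) _.
  by rewrite ler_expR lerN2.
rewrite /powR gt_eqF // -expRD.
have -> : alpha * ln x + - ((alpha + 10) * ln x) = - (10%:R * ln x) by ring.
by rewrite expRN expRM_natl lnK.
Qed.

Section DegreeTails.
Variables (R : realType) (n m : nat) (p : R) (zeta : 'I_n -> R) (theta : 'I_m -> R).
Hypothesis p01 : 0 <= p <= 1.

Local Notation kappa := (kappa2 zeta theta).
Local Notation q := (discord_prob p zeta theta).

Lemma discord_prob_01 t i : 0 <= q t i <= 1.
Proof.
have q_le := user_discordant_le p01 (prob1_01 zeta theta t) i.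
have /andP[_ p1] := p01; rewrite (le_trans q_le p1) andbT.
by rewrite sumr_ge0 // => u _; rewrite mulr_ge0 ?user_weight_ge0 //; apply: prob1_01.
Qed.

Lemma discord_prob_ge t i : 2 <= m%:R * p -> p / (8 * kappa) <= q t i.
Proof.
move=> mp_ge2; have /andP[p0 p1] := p01.
have k0 : 0 < kappa := lt_le_trans ltr01 (kappa2_ge1 zeta theta).
have m_gt0 : (0 < m)%N.
  by rewrite lt0n; apply/eqP => m0; move: mp_ge2; rewrite m0 mul0r; lra.
have pow_le : (1 - p) ^+ m.-1 <= 2^-1.
  apply: le_trans (one_sub_pow_le_expR _ p01) (le_trans _ (expRN1_le_half R)).
  rewrite ler_expR lerN2 -(prednK m_gt0) -natr1 in mp_ge2 *; nra.
have d0 : 0 <= (2 * kappa)^-1 by rewrite invr_ge0 mulr_ge0 // ltW.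
apply: le_trans (user_discordant_ge p01 (prob1_01 zeta theta t) d0
                   (fun j _ => prob1_discordance_ge zeta theta t i j)).
have -> : p / (8 * kappa) = (2 * kappa)^-1 / 2 * (p * 2^-1) by field; rewrite gt_eqF.
by rewrite ler_wpM2l ?divr_ge0 // ler_wpM2l //; lra.
Qed.

Lemma sum_discord_prob_le i : \sum_t q t i <= n%:R * p.
Proof.
apply: le_trans (ler_sum _ (fun t _ => user_discordant_le p01 (prob1_01 zeta theta t) i)) _.
by rewrite sumr_const card_ord mulr_natl.
Qed.

Lemma deg_upper_tail i :
  \sum_(w | 3 / 2 * (n%:R * p) < (deg w i)%:R) weight p zeta theta w
    <= expR (- (n%:R * p / 24)).
Proof.
apply: le_trans (exp_markov (weight_ge0 zeta theta p01) _ _ (_ : 0 <= 4^-1)) _.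
  by rewrite invr_ge0 ler0n.
rewrite mgf_deg.
apply: le_trans (ler_wpM2l (expR_ge0 _) (prod_mgf_le _ (discord_prob_01^~ i))) _.
rewrite -expRD ler_expR; have := expR_quarter_le R; have := sum_discord_prob_le i.
have : 0 <= \sum_t q t i by rewrite sumr_ge0 // => t _; have /andP[] := discord_prob_01 t i.
nra.
Qed.

Lemma deg_lower_tail i : 2 <= m%:R * p ->
  \sum_(w | (deg w i)%:R < n%:R * p / (24 * kappa)) weight p zeta theta w
    <= expR (- (n%:R * p / (48 * kappa))).
Proof.
move=> mp_ge2; set A := n%:R * p / (24 * kappa).
rewrite (eq_bigl (fun w => - A < - (deg w i)%:R)) => [|w]; last by rewrite ltrN2.
apply: le_trans (exp_markov (weight_ge0 zeta theta p01) _ _ ler01) _.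
under eq_bigr do rewrite mul1r -mulN1r.
rewrite mgf_deg.
apply: le_trans (ler_wpM2l (expR_ge0 _) (prod_mgf_le _ (discord_prob_01^~ i))) _.
rewrite -expRD ler_expR.
have sum_q : n%:R * (p / (8 * kappa)) <= \sum_t q t i.
  apply: le_trans (ler_sum _ (fun t _ => discord_prob_ge t i mp_ge2)).
  by rewrite sumr_const card_ord mulr_natl.
have := expRN1_le_half R; have := expR_gt0 (-1 : R).
have k0 : 0 < kappa by apply: lt_le_trans (kappa2_ge1 zeta theta).
have /andP[p0 _] := p01.
have : 0 <= n%:R * p / kappa by rewrite divr_ge0 ?mulr_ge0 // ltW.
rewrite /A; move: sum_q; rewrite !invfM !mulrA !(mulrAC (n%:R * p) _ kappa^-1).
set y := n%:R * p / kappa; nra.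
Qed.

Lemma deg_deviation i : 2 <= m%:R * p ->
  \sum_(w | ~~ ((n%:R * p / (24 * kappa) <= (deg w i)%:R)
               && ((deg w i)%:R <= 3 / 2 * (n%:R * p)))) weight p zeta theta w
    <= 2 * expR (- (n%:R * p / (48 * kappa))).
Proof.
move=> mp_ge2; apply: le_trans (sum_negb_and_le (weight_ge0 zeta theta p01) _ _) _.
under eq_bigl do rewrite -ltNge.
under [X in _ + X <= _]eq_bigl do rewrite -ltNge.
have k1 := kappa2_ge1 zeta theta; have /andP[p0 _] := p01.
have upper : expR (- (n%:R * p / 24)) <= expR (- (n%:R * p / (48 * kappa))).
  rewrite ler_expR lerN2 ler_wpM2l ?mulr_ge0 // lef_pV2 ?posrE ?mulr_gt0 //; lra.
apply: le_trans (lerD (deg_lower_tail i mp_ge2) (le_trans (deg_upper_tail i) upper)) _.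
by rewrite -mulr2n [X in _ <= X]mulr_natl.
Qed.

End DegreeTails.

Unset Implicit Arguments.

Theorem lemma2 (R : realType) (alpha : R) (halpha : 0 < alpha) :
  exists C : R, 0 < C /\
  forall (n m : nat) (p : R) (zeta : 'I_n -> R) (theta : 'I_m -> R),
    (0 < n)%N -> 0 < p -> p <= 1 ->
    2 <= m%:R * p ->
    m%:R <= n%:R `^ alpha ->
    C * kappa2 zeta theta ^+ 2 * ln (n%:R) <= n%:R * p ->
    1 - 2 * (n%:R ^- 10) <=
      Prob p zeta theta
        (fun w => [forall i : 'I_m,
           (n%:R * p / (24 * kappa2 zeta theta) <= (deg w i)%:R)
           && ((deg w i)%:R <= 3 / 2 * (n%:R * p))]).
Proof.
exists (48 * (alpha + 10)); split; first lra.
move=> n m p zeta theta n_gt0 p_gt0 p_le1 mp_ge2 m_le C_le.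
have p01 : 0 <= p <= 1 by rewrite ltW.
have rate : (alpha + 10) * ln n%:R <= n%:R * p / (48 * kappa2 zeta theta).
  have k1 := kappa2_ge1 zeta theta; have k0 := lt_le_trans ltr01 k1.
  have X0 : 0 <= (alpha + 10) * ln n%:R * kappa2 zeta theta.
    by rewrite !mulr_ge0 ?ln_ge0 ?ler1n ?ltW //; lra.
  rewrite ler_pdivlMr ?mulr_gt0 //.
  have := ler_wpM2r X0 k1; move: C_le; rewrite expr2; nra.
rewrite Prob_compl lerD2l lerN2.
apply: le_trans (union_bound (weight_ge0 zeta theta p01) _) _.
apply: le_trans (ler_sum _ (fun i _ => deg_deviation zeta theta p01 i mp_ge2)) _.
rewrite sumr_const card_ord -[X in X <= _]mulr_natr -[_ * _ * m%:R]mulrA.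
rewrite ler_pM2l // mulrC.
by apply: mul_expRN_le_powN m_le rate; rewrite ltr0n.
Qed.
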